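(* For every $2$-colorable oriented graph $H$ there is a bipartite tournament that forces $H$.
   Context: An oriented graph is a directed graph without loops with at most one edge between any two distinct vertices; it is $2$-colorable if its vertex set can be partitioned into $2$ sets each inducing an acyclic digraph. A bipartite tournament $F=(M\cup N,E)$ is an orientation of a complete bipartite graph with sides $M,N$. A completion of $F$ is any tournament on $V(F)$ agreeing with $F$ on the edges between $M$ and $N$. $F$ forces $H$ if every completion of $F$ contains a (not necessarily induced) copy of $H$. *)

From mathcomp Require Import all_boot.
Set Implicit Arguments. Unset Strict Implicit. Unset Printing Implicit Defensive.

Definition oriented (V : finType) (e : rel V) : Prop :=
  (forall x, ~~ e x x) /\ (forall x y, e x y -> ~~ e y x).

Definition acyclic_on (V : finType) (e : rel V) (S : {set V}) : Prop :=
  forall (x : V) (p : seq V),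
    x \in S -> all (fun y => y \in S) p -> path e x p -> last x p = x -> p = [::].

Definition two_colorable (V : finType) (e : rel V) : Prop :=
  exists A : {set V}, acyclic_on e A /\ acyclic_on e (~: A).

Definition tournament (V : finType) (t : rel V) : Prop :=
  (forall x, ~~ t x x) /\ (forall x y, x != y -> (t x y (+) t y x)).

Definition bip_tournament (V : finType) (M : {set V}) (f : rel V) : Prop :=
  (forall x y, f x y -> (x \in M) != (y \in M)) /\
  (forall x y, x \in M -> y \notin M -> (f x y (+) f y x)).

Definition completion (V : finType) (M : {set V}) (f t : rel V) : Prop :=
  tournament t /\
  (forall x y, (x \in M) != (y \in M) -> t x y = f x y).

(* t contains a (not necessarily induced) copy of H = (W, h) *)
Definition contains_copy (V W : finType) (t : rel V) (h : rel W) : Prop :=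
  exists phi : W -> V, injective phi /\ (forall u v, h u v -> t (phi u) (phi v)).

Definition forces (V W : finType) (M : {set V}) (f : rel V) (h : rel W) : Prop :=
  forall t : rel V, completion M f t -> contains_copy t h.

From mathcomp Require Import all_boot zify.
Set Implicit Arguments. Unset Strict Implicit. Unset Printing Implicit Defensive.

(* Number the vertices of H injectively by positions < L so that the arcs inside
   each colour class go forward; this is possible because both classes are acyclic.
   The forcing bipartite tournament has as N-side all pairs (X, i) of a set X of
   M-vertices and a tag i < 2^L, the vertex (X, i) being dominated exactly by X.
   In a completion, the M-side contains disjoint transitive L-chains c_r, one for
   each code r : 'I_L -> 'I_(2^L), because every 2^L vertices of a tournament
   contain a transitive L-chain.  Let the N-vertex with tag i be dominated by the
   a-th vertex of c_r exactly when r j = i and the A-vertex at position a beats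
   the non-A vertex at position j.  These 2^L N-vertices contain a transitive
   L-chain w; for the code r := w, the chains c_r and w carry exactly the cross
   arcs of H, so H embeds with A in c_r and the other colour class in w. *)

Definition chain (T : eqType) (t : rel T) (s : seq T) : bool := uniq s && pairwise t s.

Lemma chain_tnth (T : eqType) (t : rel T) n (s : n.-tuple T) (i j : 'I_n) :
  chain t s -> i < j -> t (tnth s i) (tnth s j).
Proof.
have x0 : T := tnth s i.
case/andP=> _ /(pairwiseP x0) ts ij.
by rewrite !(tnth_nth x0) ts // inE size_tuple.
Qed.

Lemma tournament_relpre_total (T U : finType) (t : rel T) (g : U -> T) :
  tournament t -> injective g -> forall x y, x != y -> relpre g t x y || relpre g t y x.
Proof.
move=> [_ t_xor] g_inj x y /eqP xy; have /t_xor : g x != g y by apply/eqP => /g_inj.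
by rewrite /=; case: (t (g x) _).
Qed.

Section Tournaments.
Variables (T : finType) (t : rel T).
Hypothesis t_total : forall x y, x != y -> t x y || t y x.

Lemma chain_in_tournament n (S : {set T}) :
  2 ^ n <= #|S| -> exists s : n.-tuple T, chain t s /\ {subset s <= S}.
Proof.
elim: n S => [|n IH] S leS; first by exists [tuple].
have /card_gt0P [x xS] : 0 < #|S| by apply: leq_trans leS; rewrite expn_gt0.
pose Out := [set y | t x y].
have : 2 ^ n <= #|(S :\ x) :&: Out| \/ 2 ^ n <= #|(S :\ x) :\: Out|.
  by have := cardsID Out (S :\ x); move: leS; rewrite (cardsD1 x S) xS expnS; lia.
have sub_Sx (B : {set T}) (s : seq T) :
    {subset s <= B} -> B \subset S :\ x -> x \notin s /\ {subset s <= S}.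
  move=> sB /subsetP BS; split; first by apply/negP => /sB /BS; rewrite !inE eqxx.
  by move=> y /sB /BS /setD1P[].
case=> [/IH [s [/andP[us ps] sOut]] | /IH [s [/andP[us ps] sIn]]].
- have [xs sS] := sub_Sx _ _ sOut (subsetIl _ _).
  exists [tuple of x :: s]; split; last by move=> y; rewrite inE => /predU1P[->|/sS].
  rewrite /chain /= xs us ps !andbT; apply/allP => y /sOut.
  by rewrite !inE => /andP[_].
- have [xs sS] := sub_Sx _ _ sIn (subsetDl _ _).
  exists [tuple of rcons s x]; split.
    rewrite /chain rcons_uniq pairwise_rcons xs us ps !andbT; apply/allP => y /sIn.
    rewrite !inE => /andP[ntxy /andP[yx _]].
    by have := t_total yx; rewrite (negbTE ntxy) orbF.
  by move=> y; rewrite mem_rcons inE => /predU1P[->|/sS].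
Qed.

Lemma disjoint_chains_in_tournament (I : finType) n (S : {set T}) :
  #|I| * 2 ^ n <= #|S| ->
  exists c : I -> n.-tuple T,
    (forall r, chain t (c r) /\ {subset c r <= S}) /\
    (forall r r', r != r' -> [disjoint c r & c r']).
Proof.
have [r0 _ leS | I0 _] := pickP I; last first.
  by exists (fun r => False_rect _ (notF (esym (I0 r)))); split=> r; have := I0 r.
have [s0 _] : exists s0 : n.-tuple T, chain t s0 /\ {subset s0 <= S}.
  apply: chain_in_tournament; apply: leq_trans leS.
  by rewrite leq_pmull //; apply/card_gt0P; exists r0.
suff [c [cS c_dis]] : exists c : I -> n.-tuple T,
    {in enum I, forall r, chain t (c r) /\ {subset c r <= S}} /\
    {in enum I &, forall r r', r != r' -> [disjoint c r & c r']}.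
  by exists c; split=> [r|r r']; [apply: cS | apply: c_dis]; rewrite mem_enum.
move: leS; rewrite [#|I|]cardE; elim: (enum I) S => [|r rs IH] S leS.
  by exists (fun=> s0).
have [s [cs sS]] : exists s : n.-tuple T, chain t s /\ {subset s <= S}.
  by apply: chain_in_tournament; apply: leq_trans leS; rewrite /= mulSn leq_addr.
have /IH [c [cS c_dis]] : size rs * 2 ^ n <= #|S :\: [set x in s]|.
  have := cardsID [set x in s] S; have : #|S :&: [set x in s]| <= n.
    apply: leq_trans (subset_leq_card (subsetIr _ _)) _.
    by rewrite cardsE (card_uniqP (andP cs).1) size_tuple.
  by move: leS (ltn_expl n (ltnSn 1)); rewrite /= mulSn; lia.
have cSS r' : r' \in rs -> {subset c r' <= S} /\ [disjoint s & c r'].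
  move=> /cS[_ sub]; split; first by move=> x /sub /setDP[].
  rewrite disjoint_subset; apply/subsetP => x xs; rewrite !inE.
  by apply/negP => /sub; rewrite !inE xs.
exists (fun r' => if r' == r then s else c r'); split.
  move=> r'; rewrite inE; case: eqP => [// | _ /= r'rs].
  by have [ch _] := cS _ r'rs; split=> // x /(cSS _ r'rs).1.
move=> r1 r2; rewrite !inE.
case: eqP => [-> _ | _ /= r1rs]; case: eqP => [-> | _ /= r2rs].
- by rewrite eqxx.
- by move=> _; have [_] := cSS _ r2rs.
- by move=> _ _; rewrite disjoint_sym; have [_] := cSS _ r1rs.
- exact: c_dis.
Qed.
End Tournaments.

Section AcyclicRank.
Variables (W : finType) (e : rel W) (S : {set W}).

Definition rel_on : rel W := [rel x y | [&& x \in S, y \in S & e x y]].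

Definition rank_on (v : W) : nat :=
  #|[set w | [exists z, rel_on w z && connect rel_on z v]]|.

Lemma path_rel_on_sub x p : path rel_on x p -> all (mem S) p /\ path e x p.
Proof.
by elim: p x => //= y p IH x /andP[/and3P[_ -> ->] /IH].
Qed.

Lemma rank_on_lt : acyclic_on e S ->
  {in S &, forall u v, e u v -> rank_on u < rank_on v}.
Proof.
move=> acS u v uS vS euv; have euv' : rel_on u v by rewrite /rel_on /= uS vS.
apply/proper_card/properP; split.
  apply/subsetP => w; rewrite !inE => /existsP[z /andP[ewz zu]].
  by apply/existsP; exists z; rewrite ewz (connect_trans zu (connect1 euv')).
exists u; first by rewrite inE; apply/existsP; exists v; rewrite euv' connect0.
rewrite inE; apply/existsP => -[z /andP[uz /connectP[p zp up]]].
have [pS pe] : all (mem S) (z :: p) /\ path e u (z :: p).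
  by apply: path_rel_on_sub; rewrite /= uz.
by have := acS u (z :: p) uS pS pe (esym up).
Qed.
End AcyclicRank.

Lemma two_class_numbering (W : finType) (h : rel W) (A : {set W}) :
  acyclic_on h A -> acyclic_on h (~: A) ->
  exists L (pos : W -> 'I_L), injective pos /\
    (forall u v, (u \in A) = (v \in A) -> h u v -> pos u < pos v).
Proof.
move=> acA acB; pose n := #|W|; pose class u := if u \in A then A else ~: A.
(* enum_rank breaks ties between vertices of equal rank *)
pose key u := rank_on h (class u) u * n + enum_rank u.
have key_lt u : key u < n.+1 * n.
  have : rank_on h (class u) u <= n by exact: max_card.
  by have := ltn_ord (enum_rank u); rewrite /key -/n; nia.
exists (n.+1 * n), (fun u => Ordinal (key_lt u)); split.
  move=> u v [] /(congr1 (modn^~ n)); rewrite /key !modnMDl !modn_small //.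
  by move=> /ord_inj /enum_rank_inj.
move=> u v uvA huv /=; have cu : class u = class v by rewrite /class uvA.
have uC : u \in class u by rewrite /class; case: ifP; rewrite ?inE => ->.
have vC : v \in class u by rewrite cu /class; case: ifP; rewrite ?inE => ->.
have acC : acyclic_on h (class u) by rewrite /class; case: ifP.
have := rank_on_lt acC uC vC huv; have := ltn_ord (enum_rank u).
by rewrite /key cu -/n; nia.
Qed.

Section ForcingTournament.
Variable L : nat.

Definition code := {ffun 'I_L -> 'I_(2 ^ L)}.
Definition Mvert := 'I_(#|{: code}| * 2 ^ L).
Definition Nvert := ({set Mvert} * 'I_(2 ^ L))%type.
Definition vert := (Mvert + Nvert)%type.

Definition Mside : {set vert} := [set x | if x is inl _ then true else false].

Definition forcing_arc : rel vert := fun x y =>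
  match x, y with
  | inl a, inr b => a \in b.1
  | inr b, inl a => a \notin b.1
  | _, _ => false
  end.

Lemma bip_tournament_forcing : bip_tournament Mside forcing_arc.
Proof.
split; first by case=> [a|b] [a'|b']; rewrite !inE.
by case=> [a|b] [a'|b']; rewrite !inE //= => _ _; case: (a \in b'.1).
Qed.

Lemma forcing_arc_inl_inr (t : rel vert) (a : Mvert) (b : Nvert) :
  completion Mside forcing_arc t -> t (inl a) (inr b) = (a \in b.1).
Proof. by case=> _ ->; rewrite ?inE. Qed.

Lemma forcing_arc_inr_inl (t : rel vert) (a : Mvert) (b : Nvert) :
  completion Mside forcing_arc t -> t (inr b) (inl a) = (a \notin b.1).
Proof. by case=> _ ->; rewrite ?inE. Qed.
End ForcingTournament.

Arguments forcing_arc : clear implicits.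

Section Embedding.
Variables (W : finType) (h : rel W) (A : {set W}) (L : nat) (pos : W -> 'I_L).
Hypothesis h_anti : forall u v, h u v -> ~~ h v u.
Hypothesis pos_inj : injective pos.
Hypothesis pos_mono : forall u v, (u \in A) = (v \in A) -> h u v -> pos u < pos v.

Definition cross_pattern : rel 'I_L := fun a j =>
  [exists u in A, exists v in ~: A, [&& pos u == a, pos v == j & h u v]].

Lemma cross_pattern_pos u v : u \in A -> v \notin A -> cross_pattern (pos u) (pos v) = h u v.
Proof.
move=> uA vA; apply/existsP/idP => [[u' /andP[_ /existsP[v' /and4P[_ ]]]] | huv].
  by move=> /eqP/pos_inj-> /eqP/pos_inj->.
by exists u; rewrite uA; apply/existsP; exists v; rewrite inE vA !eqxx.
Qed.

Lemma copy_of_pattern_chains (t : rel (vert L))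
    (sM : L.-tuple (Mvert L)) (sN : L.-tuple (Nvert L)) :
  completion (Mside L) (forcing_arc L) t ->
  chain (relpre inl t) sM -> chain (relpre inr t) sN ->
  (forall a j, (tnth sM a \in (tnth sN j).1) = cross_pattern a j) ->
  contains_copy t h.
Proof.
move=> tC chM chN pat.
exists (fun u => if u \in A then inl (tnth sM (pos u)) else inr (tnth sN (pos u))).
split=> [u v | u v huv].
  have /tuple_uniqP injM := (andP chM).1; have /tuple_uniqP injN := (andP chN).1.
  case: ifP; case: ifP => // _ _ [].
  - by move/injM/pos_inj.
  - by move/injN/pos_inj.
case: (boolP (u \in A)) => uA; case: (boolP (v \in A)) => vA.
- exact: chain_tnth chM (pos_mono (etrans uA (esym vA)) huv).
- by rewrite (forcing_arc_inl_inr _ _ tC) pat cross_pattern_pos.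
- rewrite (forcing_arc_inr_inl _ _ tC) pat cross_pattern_pos //.
  exact: h_anti.
- apply: chain_tnth chN (pos_mono _ huv).
  by rewrite (negbTE uA) (negbTE vA).
Qed.
End Embedding.

Section PatternRealization.
Variables (L : nat) (P : rel 'I_L) (c : code L -> L.-tuple (Mvert L)).
Hypothesis c_uniq : forall r, uniq (c r).
Hypothesis c_disjoint : forall r r', r != r' -> [disjoint c r & c r'].

Definition pattern_set (i : 'I_(2 ^ L)) : {set Mvert L} :=
  [set x | [exists r, exists a, exists j, [&& x == tnth (c r) a, r j == i & P a j]]].

Lemma mem_pattern_set (r : code L) a j :
  injective r -> (tnth (c r) a \in pattern_set (r j)) = P a j.
Proof.
move=> r_inj; rewrite inE; apply/existsP/idP => [[r' /existsP[a' /existsP[j']]] | Paj].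
  case/and3P=> /eqP xa' /eqP rj' Pa'j'; have rr' : r' = r.
    apply/eqP; apply/negPn/negP => /c_disjoint/disjointFr/(_ (mem_tnth a' _)).
    by rewrite -xa' mem_tnth.
  subst r'; move/tuple_uniqP: xa' => /(_ (c_uniq r)) ->.
  by move/r_inj: rj' => <-.
by exists r; apply/existsP; exists a; apply/existsP; exists j; rewrite !eqxx.
Qed.
End PatternRealization.

Lemma pattern_realized L (t : rel (vert L)) (P : rel 'I_L) :
  completion (Mside L) (forcing_arc L) t ->
  exists (sM : L.-tuple (Mvert L)) (sN : L.-tuple (Nvert L)),
    [/\ chain (relpre inl t) sM, chain (relpre inr t) sN &
    forall a j, (tnth sM a \in (tnth sN j).1) = P a j].
Proof.
move=> tC; have [t_tour _] := tC.
have [c [c_ch c_dis]] : exists c : code L -> L.-tuple (Mvert L),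
    (forall r, chain (relpre inl t) (c r) /\ {subset c r <= setT}) /\
    (forall r r', r != r' -> [disjoint c r & c r']).
  apply: (disjoint_chains_in_tournament (tournament_relpre_total t_tour inl_inj)).
  by rewrite cardsT card_ord.
pose Nv i : Nvert L := (pattern_set P c i, i).
have Nv_inj : injective Nv by move=> i i' [].
have [w [w_ch _]] : exists w : L.-tuple 'I_(2 ^ L),
    chain (relpre (inr \o Nv) t) w /\ {subset w <= setT}.
  apply: (chain_in_tournament (tournament_relpre_total t_tour (inj_comp inr_inj Nv_inj))).
  by rewrite cardsT card_ord.
pose r : code L := [ffun j => tnth w j].
have r_inj : injective r by move=> j j'; rewrite !ffunE; apply/tuple_uniqP/(andP w_ch).1.
exists (c r), (map_tuple Nv w); split; first exact: (c_ch r).1.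
  by rewrite /chain map_inj_uniq // pairwise_map.
move=> a j; rewrite tnth_map -[tnth w j](ffunE (fun j => tnth w j)).
by rewrite mem_pattern_set // => r0; have [/andP[]] := c_ch r0.
Qed.

Theorem lemma3p4 (W : finType) (h : rel W) :
  oriented h -> two_colorable h ->
  exists (V : finType) (M : {set V}) (f : rel V),
    bip_tournament M f /\ forces M f h.
Proof.
move=> [_ h_anti] [A [acA acB]].
have [L [pos [pos_inj pos_mono]]] := two_class_numbering acA acB.
exists (vert L), (Mside L), (forcing_arc L); split; first exact: bip_tournament_forcing.
move=> t tC; have [sM [sN [chM chN pat]]] := pattern_realized (cross_pattern h A pos) tC.
exact: copy_of_pattern_chains h_anti pos_inj pos_mono _ _ _ tC chM chN pat.
Qed.
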